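(* Let $b\in\mathbb{N}_{>0}$, $\mathbf{x}=(x_1,\dots,x_b)\in\{0,1\}^b$ and $\gamma_{\mathbf{x}}=\sum_{k=1}^{b}\frac{x_k}{4^k}$. Then $\gamma_{\mathbf{x}}\in[0,\tfrac13]$, and for every integer $j>0$: if $j>b$ then $\sin\!\big(4^j\tfrac{\pi}{2}\gamma_{\mathbf{x}}\big)=0$; if $j\leq b$ and $x_j=1$ then $\sin\!\big(4^j\tfrac{\pi}{2}\gamma_{\mathbf{x}}\big)\geq\tfrac23$; and if $j\leq b$ and $x_j=0$ then $\sin\!\big(4^j\tfrac{\pi}{2}\gamma_{\mathbf{x}}\big)\leq\tfrac12$. *)

From Stdlib Require Import Reals.
Open Scope R_scope.

(* x : nat -> bool encodes (x_1,...,x_b) in {0,1}^b; only indices 1..b are used. *)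
Definition bit (c : bool) : R := if c then 1 else 0.

Fixpoint gamma (b : nat) (x : nat -> bool) : R :=
  match b with
  | O => 0
  | S b' => gamma b' x + bit (x b) / 4 ^ b
  end.

(* Scaled by 4^j, gamma splits as 4 N + x_j + t with N a natural number and
   0 <= t <= 1/3: the digits before x_j contribute multiples of 4, and the
   digits after it form a base-4 tail bounded by the geometric series
   1/4 + 1/16 + ... = 1/3.  Multiplying by pi/2, the part 4 N is a whole
   number of turns, so the sine equals sin((x_j + t) pi/2), which is
   cos(t pi/2) >= cos(pi/6) = sqrt 3 / 2 > 2/3 when x_j = 1, and
   sin(t pi/2) <= sin(pi/6) = 1/2 when x_j = 0.  For j > b only the
   multiple of 4 remains. *)

From Stdlib Require Import Reals Lra Lia.
Open Scope R_scope.

Lemma pow4_pos (n : nat) : 0 < 4 ^ n.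
Proof. apply pow_lt; lra. Qed.

Lemma bit_INR (c : bool) : bit c = INR (Nat.b2n c).
Proof. destruct c; reflexivity. Qed.

Lemma gamma_scaled_nat (b : nat) (x : nat -> bool) :
  exists N : nat, 4 ^ b * gamma b x = INR N.
Proof.
  induction b as [|b [N HN]].
  - exists 0%nat. simpl. ring.
  - exists (4 * N + Nat.b2n (x (S b)))%nat.
    rewrite plus_INR, mult_INR, <- bit_INR, <- HN. simpl gamma.
    pose proof (pow4_pos b). simpl. field. lra.
Qed.

Lemma gamma_scaled_digit (j : nat) (x : nat -> bool) :
  exists N : nat, 4 ^ S j * gamma (S j) x = 4 * INR N + bit (x (S j)).
Proof.
  destruct (gamma_scaled_nat j x) as [N HN].
  exists N. rewrite <- HN. simpl gamma.
  pose proof (pow4_pos j). simpl. field. lra.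
Qed.

Lemma gamma_add_bounds (j m : nat) (x : nat -> bool) :
  0 <= gamma (j + m) x - gamma j x <= (/ 4 ^ j - / 4 ^ (j + m)) / 3.
Proof.
  induction m as [|m IH].
  - rewrite Nat.add_0_r. lra.
  - rewrite Nat.add_succ_r. cbn [gamma].
    (* the new digit is at most 1 / 4^(j+m+1) = (1/4^(j+m) - 1/4^(j+m+1)) / 3 *)
    assert (Hstep : / 4 ^ (j + m) = 4 * / 4 ^ S (j + m)).
    { pose proof (pow4_pos (j + m)). simpl. field. lra. }
    assert (Hu : 0 < / 4 ^ S (j + m)) by (apply Rinv_0_lt_compat, pow4_pos).
    destruct (x (S (j + m))); simpl bit; unfold Rdiv; lra.
Qed.

Lemma gamma_bounds (b : nat) (x : nat -> bool) : 0 <= gamma b x <= 1 / 3.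
Proof.
  pose proof (gamma_add_bounds 0 b x) as H. simpl in H.
  assert (0 < / 4 ^ b) by (apply Rinv_0_lt_compat, pow4_pos).
  rewrite Rinv_1 in H. lra.
Qed.

Lemma sin_add_quarter_turns (N : nat) (r : R) :
  sin ((4 * INR N + r) * (PI / 2)) = sin (r * (PI / 2)).
Proof.
  rewrite <- (sin_period (r * (PI / 2)) N). f_equal. field.
Qed.

Lemma sin_gamma_beyond (b j : nat) (x : nat -> bool) :
  (b < j)%nat -> sin (4 ^ j * (PI / 2) * gamma b x) = 0.
Proof.
  intros Hbj.
  destruct (gamma_scaled_nat b x) as [N HN].
  assert (E : 4 ^ j * (PI / 2) * gamma b x
              = (4 * INR (4 ^ (j - S b) * N) + 0) * (PI / 2)).
  { replace j with (S (j - S b) + b)%nat at 1 by lia.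
    rewrite mult_INR, pow_INR, <- HN, pow_add.
    replace (INR 4) with 4 by (simpl; ring). simpl. ring. }
  rewrite E, sin_add_quarter_turns, Rmult_0_l. apply sin_0.
Qed.

Lemma sin_gamma_digit (b j : nat) (x : nat -> bool) :
  (0 < j)%nat -> (j <= b)%nat ->
  exists t : R, 0 <= t <= 1 / 3 /\
    sin (4 ^ j * (PI / 2) * gamma b x) = sin ((bit (x j) + t) * (PI / 2)).
Proof.
  intros Hj Hjb.
  destruct j as [|i]; [lia|].
  destruct (gamma_scaled_digit i x) as [N HN].
  destruct (gamma_add_bounds (S i) (b - S i) x) as [Hlo Hhi].
  replace (S i + (b - S i))%nat with b in Hlo, Hhi by lia.
  pose proof (pow4_pos (S i)).
  assert (0 < / 4 ^ b) by (apply Rinv_0_lt_compat, pow4_pos).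
  exists (4 ^ S i * (gamma b x - gamma (S i) x)). split.
  - split; [nra|].
    apply Rmult_le_reg_l with (/ 4 ^ S i); [apply Rinv_0_lt_compat; lra|].
    rewrite <- Rmult_assoc, Rinv_l by lra. lra.
  - rewrite <- sin_add_quarter_turns with (N := N). f_equal.
    rewrite <- Rplus_assoc, <- HN. ring.
Qed.

Lemma sin_one_plus_quarter_ge_2_3 (t : R) :
  0 <= t <= 1 / 3 -> sin ((1 + t) * (PI / 2)) >= 2 / 3.
Proof.
  intros Ht. pose proof PI_RGT_0.
  replace ((1 + t) * (PI / 2)) with (PI / 2 + t * (PI / 2)) by ring.
  rewrite sin_plus, sin_PI2, cos_PI2.
  assert (Hcos : cos (PI / 6) <= cos (t * (PI / 2))).
  { destruct (Req_dec (t * (PI / 2)) (PI / 6)) as [E|E]; [rewrite E; lra|].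
    left. apply cos_decreasing_1; nra. }
  assert (Hsqrt : 4 / 3 <= sqrt 3).
  { rewrite <- (sqrt_pow2 (4 / 3)) by lra. apply sqrt_le_1_alt. lra. }
  rewrite cos_PI6 in Hcos. lra.
Qed.

Lemma sin_quarter_le_1_2 (t : R) :
  0 <= t <= 1 / 3 -> sin (t * (PI / 2)) <= 1 / 2.
Proof.
  intros Ht. pose proof PI_RGT_0.
  rewrite <- sin_PI6.
  destruct (Req_dec (t * (PI / 2)) (PI / 6)) as [E|E]; [rewrite E; lra|].
  left. apply sin_increasing_1; nra.
Qed.

Theorem lemma1 (b : nat) (x : nat -> bool) (hb : (0 < b)%nat) :
  0 <= gamma b x <= 1 / 3 /\
  (forall j : nat, (0 < j)%nat ->
     ((b < j)%nat -> sin (4 ^ j * (PI / 2) * gamma b x) = 0) /\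
     ((j <= b)%nat -> x j = true -> sin (4 ^ j * (PI / 2) * gamma b x) >= 2 / 3) /\
     ((j <= b)%nat -> x j = false -> sin (4 ^ j * (PI / 2) * gamma b x) <= 1 / 2)).
Proof.
  split; [apply gamma_bounds|].
  intros j Hj. split; [|split].
  - apply sin_gamma_beyond.
  - intros Hjb Hx. destruct (sin_gamma_digit b j x Hj Hjb) as [t [Ht ->]].
    rewrite Hx. apply sin_one_plus_quarter_ge_2_3, Ht.
  - intros Hjb Hx. destruct (sin_gamma_digit b j x Hj Hjb) as [t [Ht ->]].
    rewrite Hx, Rplus_0_l. apply sin_quarter_le_1_2, Ht.
Qed.
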